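(* Let $X$ be a geodesic metric space and let $\Gamma\subset X$ be a topological arc connecting two points $a,b\in X$. Then for every $\varepsilon>0$ there exists a biLipschitz curve contained in the $\varepsilon$-neighborhood of $\Gamma$ and connecting $a$ and $b$.
   Context: A topological arc is a subset homeomorphic to a closed interval. A curve $\gamma\colon[s,t]\to X$ is biLipschitz if there is $K\ge1$ with $K^{-1}|r-r'|\le d(\gamma(r),\gamma(r'))\le K|r-r'|$ for all $r,r'$. *)

From Stdlib Require Import Reals Lra.
Open Scope R_scope.

Definition is_metric {X : Type} (d : X -> X -> R) : Prop :=
  (forall x y, 0 <= d x y) /\
  (forall x y, d x y = 0 <-> x = y) /\
  (forall x y, d x y = d y x) /\
  (forall x y z, d x z <= d x y + d y z).

Definition geodesic_space {X : Type} (d : X -> X -> R) : Prop :=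
  forall x y : X, exists g : R -> X,
    g 0 = x /\ g (d x y) = y /\
    forall r r', 0 <= r <= d x y -> 0 <= r' <= d x y ->
      d (g r) (g r') = Rabs (r - r').

Definition is_arc {X : Type} (d : X -> X -> R) (Gamma : X -> Prop) (a b : X) : Prop :=
  exists f : R -> X,
    (forall p, 0 <= p <= 1 -> Gamma (f p)) /\
    (forall x, Gamma x -> exists p, 0 <= p <= 1 /\ f p = x) /\
    (forall p q, 0 <= p <= 1 -> 0 <= q <= 1 -> f p = f q -> p = q) /\
    (forall p, 0 <= p <= 1 -> forall e, 0 < e -> exists del, 0 < del /\
       forall q, 0 <= q <= 1 -> Rabs (p - q) < del -> d (f p) (f q) < e) /\
    (forall p, 0 <= p <= 1 -> forall e, 0 < e -> exists del, 0 < del /\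
       forall q, 0 <= q <= 1 -> d (f p) (f q) < del -> Rabs (p - q) < e) /\
    f 0 = a /\ f 1 = b.

Definition biLipschitz_on {X : Type} (d : X -> X -> R) (g : R -> X) (s t : R) : Prop :=
  exists K, 1 <= K /\
    forall r r', s <= r <= t -> s <= r' <= t ->
      / K * Rabs (r - r') <= d (g r) (g r') /\ d (g r) (g r') <= K * Rabs (r - r').

Definition eps_nbhd {X : Type} (d : X -> X -> R) (Gamma : X -> Prop) (eps : R) (x : X) : Prop :=
  exists p, Gamma p /\ d x p < eps.

From Stdlib Require Import Reals Lra Classical.
Open Scope R_scope.

(* The curve is built by induction, each step appending to the current curve P
   (of length S, ending at x) a geodesic segment towards a point z of the arc
   with d x z < del.  The segment is not attached at x but at a minimiser ts of
   t |-> d (P t) z + t / (K + 1): the triangle inequality through z then shows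
   that the new curve is still biLipschitz, with co-Lipschitz constant K + 1
   instead of K.  The length grows by less than del per step, so S <= K del,
   and minimality at t = S bounds the new segment by d x z + S / (K + 1), i.e.
   by 2 del; it therefore stays in the eps-neighbourhood.  Whether f p is
   reached by such a curve is a locally constant property of p in [0, 1], and
   it holds at p = 0, hence at p = 1. *)

Lemma lipschitz_continuity_pt (F : R -> R) (K : R) : 0 < K ->
  (forall x y, Rabs (F x - F y) <= K * Rabs (x - y)) -> forall x, continuity_pt F x.
Proof.
  intros HK HF x e He. exists (e / K). split.
  - apply Rdiv_lt_0_compat; lra.
  - intros y [_ Hy]. simpl in *. unfold R_dist in *.
    eapply Rle_lt_trans; [apply HF|].
    apply Rmult_lt_reg_l with (/ K); [apply Rinv_0_lt_compat; lra|].
    rewrite <- Rmult_assoc, Rinv_l by lra. unfold Rdiv in Hy. lra.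
Qed.

Lemma Rmin_lipschitz a b c : Rabs (Rmin a c - Rmin b c) <= Rabs (a - b).
Proof.
  unfold Rmin; destruct (Rle_dec a c), (Rle_dec b c);
    unfold Rabs; repeat destruct Rcase_abs; lra.
Qed.

Lemma locally_constant_unit_interval (E : R -> Prop) :
  E 0 ->
  (forall p, 0 <= p <= 1 -> exists eta, 0 < eta /\
     forall q, 0 <= q <= 1 -> Rabs (p - q) < eta -> (E p <-> E q)) ->
  E 1.
Proof.
  intros E0 Hloc.
  destruct (completeness (fun p => 0 <= p <= 1 /\ E p)) as [s [s_ub s_lub]].
  { exists 1. intros p [Hp _]. lra. }
  { exists 0. split; [lra | exact E0]. }
  assert (s_ge0 : 0 <= s) by (apply s_ub; split; [lra | exact E0]).
  assert (s_le1 : s <= 1) by (apply s_lub; intros p [Hp _]; lra).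
  destruct (Hloc s (conj s_ge0 s_le1)) as [eta [eta_pos Heta]].
  assert (Es : E s).
  { apply NNPP. intro nEs.
    assert (s <= s - eta); [|lra].
    apply s_lub. intros p [Hp Ep]. apply Rnot_lt_le. intro Hlt.
    assert (p <= s) by (apply s_ub; auto).
    apply nEs, (Heta p Hp); [rewrite Rabs_right|]; auto; lra. }
  destruct (Rle_dec (s + eta / 2) 1).
  - assert (s + eta / 2 <= s); [|lra].
    apply s_ub. split; [lra|].
    apply (Heta (s + eta / 2)); [lra | rewrite Rabs_left; lra | exact Es].
  - apply (Heta 1); [lra | rewrite Rabs_left1; lra | exact Es].
Qed.

Section MetricPaths.

Context {X : Type} (d : X -> X -> R).
Hypotheses (d_nonneg : forall x y, 0 <= d x y) (d_refl : forall x, d x x = 0)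
  (d_sym : forall x y, d x y = d y x)
  (d_triangle : forall x y z, d x z <= d x y + d y z).

Definition one_lipschitz (P : R -> X) : Prop :=
  forall r r', d (P r) (P r') <= Rabs (r - r').

Definition co_lipschitz_on (K : R) (P : R -> X) (s t : R) : Prop :=
  forall r r', s <= r <= t -> s <= r' <= t -> Rabs (r - r') <= K * d (P r) (P r').

Definition geodesic_segment (G : R -> X) (x y : X) : Prop :=
  G 0 = x /\ G (d x y) = y /\
  forall r r', 0 <= r <= d x y -> 0 <= r' <= d x y -> d (G r) (G r') = Rabs (r - r').

Lemma dist_reverse_triangle x y z : Rabs (d x z - d y z) <= d x y.
Proof.
  assert (H1 := d_triangle x y z). assert (H2 := d_triangle y x z).
  rewrite (d_sym y x) in H2. apply Rabs_le. lra.
Qed.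

Lemma geodesic_segment_dist_end G x y v :
  geodesic_segment G x y -> 0 <= v <= d x y -> d (G v) y = d x y - v.
Proof.
  intros (G0 & G1 & Giso) Hv. rewrite <- G1 at 1.
  rewrite Giso by (auto; lra). rewrite Rabs_left1; lra.
Qed.

Lemma penalized_dist_min P z c S : 0 <= c -> 0 <= S -> one_lipschitz P ->
  exists ts, 0 <= ts <= S /\
    forall t, 0 <= t <= S -> d (P ts) z + c * ts <= d (P t) z + c * t.
Proof.
  intros Hc HS HP.
  destruct (continuity_ab_min (fun t => d (P t) z + c * t) 0 S HS)
    as [ts [Hmin Hts]]; [|eauto].
  intros t _. apply (lipschitz_continuity_pt _ (1 + c)); [lra|].
  intros u v.
  replace (d (P u) z + c * u - (d (P v) z + c * v))
    with ((d (P u) z - d (P v) z) + c * (u - v)) by ring.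
  eapply Rle_trans; [apply Rabs_triang|].
  rewrite Rabs_mult, (Rabs_pos_eq c) by exact Hc.
  assert (Rabs (d (P u) z - d (P v) z) <= Rabs (u - v)).
  { eapply Rle_trans; [apply dist_reverse_triangle | apply HP]. }
  lra.
Qed.

(* The strict test makes the value at ts + D equal to G D even when D = 0. *)
Definition concat_path (P : R -> X) (ts : R) (G : R -> X) (D : R) : R -> X :=
  fun r => if Rlt_dec r ts then P r else G (Rmin (r - ts) D).

Lemma concat_path_left P ts G D r :
  G 0 = P ts -> 0 <= D -> r <= ts -> concat_path P ts G D r = P r.
Proof.
  intros G0 HD Hr. unfold concat_path. destruct (Rlt_dec r ts); [reflexivity|].
  replace r with ts by lra. rewrite Rmin_left by lra.
  replace (ts - ts) with 0 by ring. exact G0.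
Qed.

Lemma concat_path_right P ts G D r :
  ts <= r <= ts + D -> concat_path P ts G D r = G (r - ts).
Proof.
  intros Hr. unfold concat_path. destruct (Rlt_dec r ts); [lra|].
  rewrite Rmin_left by lra. reflexivity.
Qed.

Lemma concat_path_one_lipschitz P ts G z :
  one_lipschitz P -> geodesic_segment G (P ts) z ->
  one_lipschitz (concat_path P ts G (d (P ts) z)).
Proof.
  intros HP (G0 & _ & Giso).
  set (D := d (P ts) z) in *.
  assert (HD : 0 <= D) by apply d_nonneg.
  assert (clamp : forall r, ~ r < ts ->
            0 <= Rmin (r - ts) D <= D /\ Rmin (r - ts) D <= r - ts).
  { intros r Hr. unfold Rmin. destruct Rle_dec; lra. }
  assert (mixed : forall r r', r < ts -> ~ r' < ts ->
            d (P r) (G (Rmin (r' - ts) D)) <= Rabs (r - r')).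
  { intros r r' Hr Hr'. destruct (clamp r' Hr') as [Hm Hm'].
    eapply Rle_trans; [apply (d_triangle _ (P ts))|].
    rewrite <- G0 at 2. rewrite Giso by lra.
    assert (HPr := HP r ts).
    rewrite Rabs_left1 in HPr by lra.
    rewrite (Rabs_left1 (0 - _)), (Rabs_left1 (r - r')) by lra. lra. }
  intros r r'. unfold concat_path.
  destruct (Rlt_dec r ts) as [Hr | Hr], (Rlt_dec r' ts) as [Hr' | Hr'].
  - apply HP.
  - apply mixed; assumption.
  - rewrite d_sym, Rabs_minus_sym. apply mixed; assumption.
  - destruct (clamp r Hr), (clamp r' Hr'). rewrite Giso by lra.
    eapply Rle_trans; [apply Rmin_lipschitz|].
    replace (r - ts - (r' - ts)) with (r - r') by ring. lra.
Qed.

Lemma penalized_min_lower_bound K P ts G z r v :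
  0 <= K -> geodesic_segment G (P ts) z -> 0 <= v <= d (P ts) z ->
  d (P ts) z + / (K + 1) * ts <= d (P r) z + / (K + 1) * r ->
  (ts - r) + v <= (K + 1) * d (P r) (G v).
Proof.
  intros HK HG Hv Hmin.
  assert (Hz := d_triangle (P r) (G v) z).
  rewrite (geodesic_segment_dist_end _ _ _ _ HG Hv) in Hz.
  assert (H : / (K + 1) * (ts - r) + v <= d (P r) (G v)) by lra.
  apply Rmult_le_compat_l with (r := K + 1) in H; [|lra].
  rewrite Rmult_plus_distr_l, <- Rmult_assoc, Rinv_r, Rmult_1_l in H by lra.
  nra.
Qed.

Lemma concat_path_co_lipschitz K P ts G z :
  0 <= K -> co_lipschitz_on K P 0 ts -> geodesic_segment G (P ts) z ->
  (forall t, 0 <= t <= ts ->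
     d (P ts) z + / (K + 1) * ts <= d (P t) z + / (K + 1) * t) ->
  co_lipschitz_on (K + 1) (concat_path P ts G (d (P ts) z)) 0 (ts + d (P ts) z).
Proof.
  intros HK HP HG Hmin.
  pose proof HG as (G0 & _ & Giso).
  set (D := d (P ts) z) in *.
  assert (HD : 0 <= D) by apply d_nonneg.
  assert (mixed : forall r r', 0 <= r <= ts -> ts <= r' <= ts + D ->
            Rabs (r - r') <= (K + 1) * d (P r) (G (r' - ts))).
  { intros r r' Hr Hr'. rewrite Rabs_left1 by lra.
    assert (H := penalized_min_lower_bound K P ts G z r (r' - ts) HK HG
                   ltac:(unfold D in *; lra) (Hmin r Hr)).
    lra. }
  intros r r' Hr Hr'.
  destruct (Rle_dec r ts), (Rle_dec r' ts).
  - rewrite !concat_path_left by assumption.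
    assert (H := HP r r' ltac:(lra) ltac:(lra)).
    assert (0 <= d (P r) (P r')) by apply d_nonneg. lra.
  - rewrite concat_path_left, concat_path_right by (auto; lra). apply mixed; lra.
  - rewrite concat_path_right, concat_path_left by (auto; lra).
    rewrite d_sym, Rabs_minus_sym. apply mixed; lra.
  - rewrite !concat_path_right, Giso by lra.
    replace (r - ts - (r' - ts)) with (r - r') by ring.
    assert (0 <= Rabs (r - r')) by apply Rabs_pos. nra.
Qed.

Section Approximation.

Context (Gamma : X -> Prop) (eps del : R) (a : X).
Hypotheses (geodesic : geodesic_space d) (del_eps : 2 * del <= eps).

Definition admissible_path (K S : R) (P : R -> X) (x : X) : Prop :=
  1 <= K /\ 0 <= S <= K * del /\ P 0 = a /\ P S = x /\
  one_lipschitz P /\ co_lipschitz_on K P 0 S /\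
  forall r, 0 <= r <= S -> eps_nbhd d Gamma eps (P r).

Lemma admissible_path_const : Gamma a -> 0 < eps -> 0 <= del ->
  admissible_path 1 0 (fun _ => a) a.
Proof.
  intros Ha Heps Hdel.
  repeat split; try lra; try reflexivity.
  - intros r r'. rewrite d_refl. apply Rabs_pos.
  - intros r r' Hr Hr'. replace (r - r') with 0 by lra. rewrite Rabs_R0, d_refl. lra.
  - intros r _. exists a. rewrite d_refl. auto.
Qed.

Lemma admissible_path_extend K S P x z :
  admissible_path K S P x -> d x z < del -> Gamma z ->
  exists S' P', admissible_path (K + 1) S' P' z.
Proof.
  intros (HK & HS & HP0 & HPS & HPlip & HPco & HPnbhd) Hxz Hz.
  set (c := / (K + 1)).
  assert (Hc : 0 < c <= 1).
  { split; [apply Rinv_0_lt_compat; lra|].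
    unfold c. rewrite <- Rinv_1. apply Rinv_le_contravar; lra. }
  destruct (penalized_dist_min P z c S ltac:(lra) ltac:(lra) HPlip) as [ts [Hts Hmin]].
  destruct (geodesic (P ts) z) as [G HG].
  set (D := d (P ts) z).
  assert (HD : D + c * ts <= d x z + c * S) by (rewrite <- HPS; apply Hmin; lra).
  assert (HcS : c * S < del).
  { apply Rle_lt_trans with (c * (K * del)); [apply Rmult_le_compat_l; lra|].
    replace (c * (K * del)) with (del * (K * c)) by ring.
    assert (HKc : K * c = 1 - c) by (unfold c; field; lra).
    assert (0 < del) by (pose proof (d_nonneg x z); lra).
    rewrite HKc. nra. }
  assert (HcSts : c * (S - ts) <= S - ts) by nra.
  assert (0 <= c * ts) by nra.
  assert (HD0 : 0 <= D) by apply d_nonneg.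
  assert (D_short : D < 2 * del) by lra.
  assert (length_bound : ts + D <= (K + 1) * del) by lra.
  pose proof HG as (G0 & G1 & _).
  exists (ts + D), (concat_path P ts G D).
  repeat split; try lra.
  - rewrite concat_path_left by (auto; lra). exact HP0.
  - rewrite concat_path_right by lra. replace (ts + D - ts) with D by ring. exact G1.
  - apply concat_path_one_lipschitz; assumption.
  - apply concat_path_co_lipschitz; try assumption; try lra.
    + intros r r' Hr Hr'. apply HPco; lra.
    + intros t Ht. apply Hmin. lra.
  - intros r Hr. destruct (Rle_dec r ts).
    + rewrite concat_path_left by (auto; lra). apply HPnbhd. lra.
    + rewrite concat_path_right by lra. exists z. split; [exact Hz|].
      rewrite (geodesic_segment_dist_end _ _ _ _ HG) by (unfold D in *; lra).
      fold D. lra.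
Qed.

Lemma admissible_path_biLipschitz K S P x :
  admissible_path K S P x -> biLipschitz_on d P 0 S.
Proof.
  intros (HK & _ & _ & _ & HPlip & HPco & _).
  exists K. split; [exact HK|]. intros r r' Hr Hr'. split.
  - apply Rmult_le_reg_l with K; [lra|].
    rewrite <- Rmult_assoc, Rinv_r, Rmult_1_l by lra. apply HPco; assumption.
  - eapply Rle_trans; [apply HPlip|].
    assert (0 <= Rabs (r - r')) by apply Rabs_pos. nra.
Qed.

End Approximation.

End MetricPaths.

Theorem lemma4p3 (X : Type) (d : X -> X -> R)
  (Hd : is_metric d) (Hgeo : geodesic_space d)
  (Gamma : X -> Prop) (a b : X) (Harc : is_arc d Gamma a b)
  (eps : R) (Heps : 0 < eps) :
  exists (s t : R) (g : R -> X),
    s <= t /\ g s = a /\ g t = b /\ biLipschitz_on d g s t /\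
    (forall r, s <= r <= t -> eps_nbhd d Gamma eps (g r)).
Proof.
  destruct Hd as (d_nonneg & d_eq0 & d_sym & d_triangle).
  assert (d_refl : forall x, d x x = 0) by (intro; apply d_eq0; reflexivity).
  destruct Harc as (f & f_in & _ & _ & f_cont & _ & f0 & f1).
  set (del := eps / 2).
  set (reachable := fun x => exists K S P, admissible_path d Gamma eps del a K S P x).
  assert (Hb : reachable (f 1)).
  { apply (locally_constant_unit_interval (fun p => reachable (f p))).
    - exists 1, 0, (fun _ => a). rewrite f0.
      apply admissible_path_const; auto; unfold del; try lra.
      rewrite <- f0. apply f_in. lra.
    - assert (step : forall p q, 0 <= q <= 1 -> d (f p) (f q) < del ->
                reachable (f p) -> reachable (f q)).
      { intros p q Hq Hpq (K & S & P & HP). exists (K + 1).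
        eapply admissible_path_extend; eauto; unfold del; lra. }
      intros p Hp. destruct (f_cont p Hp del ltac:(unfold del; lra)) as [eta [eta_pos Heta]].
      exists eta. split; [exact eta_pos|]. intros q Hq Hpq.
      split; intro Hreach.
      + exact (step p q Hq (Heta q Hq Hpq) Hreach).
      + apply (step q p Hp); [rewrite d_sym; exact (Heta q Hq Hpq) | exact Hreach]. }
  destruct Hb as (K & S & P & HP).
  pose proof HP as (_ & HS & HP0 & HPS & _ & _ & HPnbhd).
  exists 0, S, P.
  split; [lra|]. split; [exact HP0|]. split; [rewrite <- f1; exact HPS|].
  split; [eapply admissible_path_biLipschitz, HP | exact HPnbhd].
Qed.
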